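(* Let $P$ be a finite poset with $P \in \mathcal{N}_2$. Then every convex subposet $Q$ of $P$ (a subset $Q\subseteq P$ such that $x\le z\le y$ with $x,y\in Q$ implies $z\in Q$, with the induced order) also belongs to $\mathcal{N}_2$.
   Context: All posets are finite. An edge of a poset is a covering relation $x \lessdot y$. A chain cover of a poset $P$ is a set of pairwise disjoint saturated chains whose union is $P$. A labeling of $P$ is a map $\lambda:P\to\mathbb{R}$. For a chain cover $\mathcal{C}$, $\mathcal{C}$-sorting a labeling means: for each chain $\bm{c}\in\mathcal{C}$, permute the labels $\{\lambda(v): v\in \bm{c}\}$ among the elements of $\bm{c}$ so that they are non-decreasing from the minimum of $\bm{c}$ to its maximum. A finite poset $P$ has the non-messing-up property, written $P\in\mathcal{N}_2$ (via $\{\mathcal{C}_1,\mathcal{C}_2\}$), if there exists an unordered pair of chain covers $\{\mathcal{C}_1,\mathcal{C}_2\}$ of $P$ such that (1) for every labeling of $P$ and for $i=1$ and $i=2$, first $\mathcal{C}_i$-sorting and then $\mathcal{C}_{3-i}$-sorting leaves the labels non-decreasing along every chain of $\mathcal{C}_i$; and (2) every edge of $P$ is contained in some chain of $\mathcal{C}_1$ or of $\mathcal{C}_2$. *)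

From HB Require Import structures.
From mathcomp Require Import all_boot all_order all_algebra.
From mathcomp Require Import Rstruct.
From Stdlib Require Rdefinitions.
Notation R := Rdefinitions.R.
Set Implicit Arguments. Unset Strict Implicit. Unset Printing Implicit Defensive.
Import Order.TTheory GRing.Theory Num.Theory.

Section N2.
Context {d : Order.disp_t} {T : finPOrderType d}.

(* A (sub)poset is a set A : {set T} with the order induced from T. *)

Definition covers_in (A : {set T}) (x y : T) : bool :=
  [&& x \in A, y \in A, (x < y)%O &
      ~~ [exists z in A, (x < z)%O && (z < y)%O]].

Definition saturated_chain (A : {set T}) (c : seq T) : bool :=
  (c != [::]) && all (mem A) c && sorted (covers_in A) c.

(* a chain cover: pairwise disjoint saturated chains whose union is A
   (disjointness and covering: every element of A occurs exactly once) *)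
Definition chain_cover (A : {set T}) (C : seq (seq T)) : bool :=
  all (saturated_chain A) C && perm_eq (flatten C) (enum A).

Definition sort_chain (lam : T -> R) (c : seq T) : T -> R :=
  fun v => if v \in c
           then nth 0%R (sort (fun a b : R => (a <= b)%R) [seq lam u | u <- c]) (index v c)
           else lam v.

Definition csort (C : seq (seq T)) (lam : T -> R) : T -> R :=
  foldl sort_chain lam C.

Definition chain_sorted (lam : T -> R) (c : seq T) : bool :=
  sorted (fun a b : R => (a <= b)%R) [seq lam u | u <- c].

Definition non_messing_pair (A : {set T}) (C1 C2 : seq (seq T)) : Prop :=
  chain_cover A C1 /\ chain_cover A C2 /\
  (forall lam : T -> R,
      all (chain_sorted (csort C2 (csort C1 lam))) C1 /\
      all (chain_sorted (csort C1 (csort C2 lam))) C2) /\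
  (forall x y : T, covers_in A x y ->
      has (fun c => (x \in c) && (y \in c)) (C1 ++ C2)).

Definition N2 (A : {set T}) : Prop :=
  exists C1 C2 : seq (seq T), non_messing_pair A C1 C2.

Definition convex (Q : {set T}) : Prop :=
  forall x y z : T, x \in Q -> y \in Q -> (x <= z)%O -> (z <= y)%O -> z \in Q.

End N2.

From HB Require Import structures.
From mathcomp Require Import all_boot all_order all_algebra.
From mathcomp Require Import Rstruct.
Import Order.TTheory GRing.Theory Num.Theory.
Set Implicit Arguments. Unset Strict Implicit. Unset Printing Implicit Defensive.

(* Given chain covers C1, C2 of P witnessing P \in N_2, intersect every chain
   with Q.  Since Q is convex, a saturated chain c of P meets Q in a contiguous
   segment, which is a saturated chain of Q; before it come the elements of c
   strictly below Q, after it the remaining ones.  A labeling lam of Q is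
   extended to P by -M below Q and M elsewhere, where M bounds |lam|.  Sorting
   c then leaves the -M's and M's in place and sorts exactly the segment in Q,
   so sorting P along C1 then C2 restricts to sorting Q along the restricted
   covers, and the non-messing-up property of P restricts to Q. *)

Lemma sorted_filter_cat (X : eqType) (r : rel X) (a : pred X) (s : seq X) :
  (forall x y, r x y -> a y -> a x) -> sorted r s ->
  s = [seq x <- s | a x] ++ [seq x <- s | ~~ a x].
Proof.
move=> a_closed; elim: s => //= x s IH xs; have {IH} := IH (path_sorted xs).
case: ifP => [_ /= <- //|/negbT nax _].
have nas : all (predC a) s.
  elim: s x xs nax => //= y s IH x /andP[rxy ys] nax.
  have nay : ~~ a y by apply: contra nax; apply: a_closed.
  by rewrite nay (IH y).
have /eqP -> : [seq y <- s | a y] == [::] by rewrite -[_ == _]negbK -has_filter -all_predC.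
by rewrite (all_filterP nas).
Qed.

Lemma flatten_filter_nil (X : eqType) (L : seq (seq X)) :
  flatten [seq s <- L | s != [::]] = flatten L.
Proof. by elim: L => //= s L IH; have [->|_] := eqVneq s [::]; rewrite /= IH. Qed.

Local Notation leR := (fun x y : R => (x <= y)%R).

Lemma sort_cat_allrel (s1 s2 : seq R) : allrel leR s1 s2 ->
  sort leR (s1 ++ s2) = sort leR s1 ++ sort leR s2.
Proof.
move=> s12; apply: (sorted_eq le_trans le_anti).
- exact: (sort_sorted le_total).
- rewrite (sorted_pairwise le_trans) pairwise_cat.
  rewrite -!(sorted_pairwise le_trans) !(sort_sorted le_total) !andbT.
  by apply/allrelP => x y; rewrite !mem_sort; apply: (allrelP s12).
- by rewrite perm_sort; apply: perm_cat; rewrite perm_sym perm_sort.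
Qed.

Section SortChain.
Context {d : Order.disp_t} {T : finPOrderType d}.
Implicit Types (mu nu : T -> R) (c : seq T) (C : seq (seq T)).

Lemma sort_chain_notin mu c v : v \notin c -> sort_chain mu c v = mu v.
Proof. by rewrite /sort_chain => /negbTE ->. Qed.

Lemma eq_sort_chain mu nu c : mu =1 nu -> sort_chain mu c =1 sort_chain nu c.
Proof. by move=> eq_mu v; rewrite /sort_chain (eq_map eq_mu) eq_mu. Qed.

Lemma eq_in_sort_chain mu nu c :
  {in c, mu =1 nu} -> {in c, sort_chain mu c =1 sort_chain nu c}.
Proof. by move=> /eq_in_map eq_mu v vc; rewrite /sort_chain vc eq_mu. Qed.

Lemma sort_chain_mem mu c v : v \in c -> sort_chain mu c v \in map mu c.
Proof.
move=> vc; rewrite /sort_chain vc -(mem_sort leR).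
by rewrite mem_nth // size_sort size_map index_mem.
Qed.

Lemma sort_chain_inv (A : {pred T}) (P : pred R) mu c :
  {subset c <= A} -> {in A, forall v, P (mu v)} ->
  {in A, forall v, P (sort_chain mu c v)}.
Proof.
move=> cA PA v vA; have [vc|vc] := boolP (v \in c); last by rewrite sort_chain_notin // PA.
by have /mapP[u uc ->] := sort_chain_mem mu vc; apply/PA/cA.
Qed.

Lemma sort_chain_const mu c (x : R) :
  {in c, forall u, mu u = x} -> sort_chain mu c =1 mu.
Proof.
move=> mu_x v; have [vc|vc] := boolP (v \in c); last exact: sort_chain_notin.
by have /mapP[u uc ->] := sort_chain_mem mu vc; rewrite !mu_x.
Qed.

Lemma sort_chain_cat mu a b : allrel (fun x y => mu x <= mu y)%R a b ->
  sort_chain mu (a ++ b) =1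
  (fun v => if v \in a then sort_chain mu a v else sort_chain mu b v).
Proof.
move=> ab v; rewrite {1}/sort_chain map_cat sort_cat_allrel; last first.
  by rewrite allrel_mapl allrel_mapr.
have size_a : size (sort leR (map mu a)) = size a by rewrite size_sort size_map.
rewrite mem_cat index_cat nth_cat size_a; have [va|va] := boolP (v \in a).
  by rewrite /= index_mem va /sort_chain va.
by rewrite /= ltnNge leq_addr /= addKn /sort_chain.
Qed.

Lemma csort_inv (A : {pred T}) (P : pred R) C mu :
  all (fun c => all (mem A) c) C -> {in A, forall v, P (mu v)} ->
  {in A, forall v, P (csort C mu v)}.
Proof.
elim: C mu => //= c C IH mu /andP[cA CA] PA; apply: IH => //.
exact/sort_chain_inv/PA/allP.
Qed.

Lemma eq_csort C mu nu : mu =1 nu -> csort C mu =1 csort C nu.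
Proof.
by elim: C mu nu => //= c C IH mu nu eq_mu; apply/IH/eq_sort_chain.
Qed.

Lemma csort_filter_nil C mu : csort [seq c <- C | c != [::]] mu =1 csort C mu.
Proof.
by elim: C mu => //= -[|x c] C IH mu; apply: IH.
Qed.

Lemma chain_cover_sorted (A : {set T}) C :
  chain_cover A C -> all (sorted (covers_in A)) C.
Proof. by case/andP=> /allP C_sat _; apply/allP => c /C_sat /andP[]. Qed.

End SortChain.

Section ConvexSubposet.
Context {d : Order.disp_t} {T : finPOrderType d} (Q : {set T}).
Hypothesis convQ : convex Q.
Implicit Types (mu nu : T -> R) (c : seq T) (C : seq (seq T)).
Local Notation covers := (covers_in [set: T]).

Lemma covers_in_convex x y : covers_in Q x y -> covers x y.
Proof.
case/and4P=> xQ yQ xy /existsP noz; apply/and4P; split; rewrite ?in_setT //.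
apply/existsP=> -[z /and3P[_ xz zy]]; apply: noz; exists z.
by rewrite xz zy (convQ xQ yQ (ltW xz) (ltW zy)).
Qed.

Definition below (v : T) : bool := [exists q in Q, (v < q)%O].

Definition restr c : seq T := [seq v <- c | v \in Q].

Lemma chain_split c : sorted covers c ->
  c = [seq v <- c | (v \notin Q) && below v] ++ restr c ++
      [seq v <- c | (v \notin Q) && ~~ below v].
Proof.
move=> cs; have lt_c : sorted <%O c by apply: sub_sorted cs => x y /and4P[].
have down_closed x y : (x < y)%O -> (y \in Q) || below y -> (x \in Q) || below x.
  move=> xy yQb; apply/orP; right; case/orP: yQb => [yQ|/existsP[q /andP[qQ yq]]].
    by apply/existsP; exists y; rewrite yQ xy.
  by apply/existsP; exists q; rewrite qQ (lt_trans xy yq).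
have strict_down_closed x y :
    (x < y)%O -> (y \notin Q) && below y -> (x \notin Q) && below x.
  move=> xy /andP[yQ /existsP[q /andP[qQ yq]]]; apply/andP; split.
    by apply: contra yQ => xQ; apply: convQ xQ qQ (ltW xy) (ltW yq).
  by apply/existsP; exists q; rewrite qQ (lt_trans xy yq).
rewrite {1}(sorted_filter_cat down_closed lt_c).
rewrite {1}(sorted_filter_cat strict_down_closed (sorted_filter lt_trans _ lt_c)).
rewrite -catA -!filter_predI; congr (_ ++ _ ++ _); apply: eq_filter => v /=.
all: by case: (v \in Q); case: (below v).
Qed.

Lemma sorted_restr c : sorted covers c -> sorted (covers_in Q) (restr c).
Proof.
move=> cs; have := cs; rewrite {1}(chain_split cs) => /cat_sorted2[_ /cat_sorted2[rs _]].
apply: (sub_in_sorted (P := mem Q)) rs; last exact: filter_all.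
move=> x y xQ yQ /and4P[_ _ xy /existsP noz]; apply/and4P; split=> //.
by apply/existsP=> -[z /and3P[_ xz zy]]; apply: noz; exists z; rewrite in_setT xz zy.
Qed.

Definition restrC C : seq (seq T) := [seq s <- map restr C | s != [::]].

Lemma chain_cover_restrC C : chain_cover [set: T] C -> chain_cover Q (restrC C).
Proof.
move=> coverC; have /allP Cs := chain_cover_sorted coverC.
case/andP: coverC => _ Cperm; apply/andP; split.
  apply/allP => s; rewrite mem_filter => /andP[r_ne /mapP[c cC s_def]]; subst s.
  by rewrite /saturated_chain r_ne filter_all sorted_restr ?Cs.
have -> : flatten (restrC C) = [seq v <- flatten C | v \in Q].
  by rewrite /restrC flatten_filter_nil filter_flatten.
apply: perm_trans (perm_filter _ Cperm) _; apply: uniq_perm.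
- exact/filter_uniq/enum_uniq.
- exact: enum_uniq.
- by move=> x; rewrite mem_filter !mem_enum in_setT andbT.
Qed.

Lemma has_restrC C x y : x \in Q -> y \in Q ->
  has (fun c => (x \in c) && (y \in c)) C ->
  has (fun c => (x \in c) && (y \in c)) (restrC C).
Proof.
move=> xQ yQ /hasP[c cC /andP[xc yc]]; apply/hasP; exists (restr c).
  by rewrite mem_filter map_f // andbT -has_filter; apply/hasP; exists x.
by rewrite !mem_filter xQ yQ xc yc.
Qed.

Section Extension.
Variable M : R.
Hypothesis M_ge0 : (0 <= M)%R.

Definition extend nu (v : T) : R :=
  if v \in Q then nu v else if below v then (- M)%R else M.

Definition bounded nu : Prop := {in Q, forall v, `|nu v| <= M}%R.

Lemma extend_bounds nu : bounded nu -> forall v, (- M <= extend nu v <= M)%R.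
Proof.
move=> bnu v; rewrite -ler_norml /extend; case: ifP => [vQ|_]; first exact: bnu.
by case: ifP; rewrite ?normrN ger0_norm.
Qed.

Lemma sort_chain_extend nu c : sorted covers c -> bounded nu ->
  sort_chain (extend nu) c =1 extend (sort_chain nu (restr c)).
Proof.
move=> cs bnu v; have bounds := extend_bounds bnu.
have lowerE u : u \in [seq w <- c | (w \notin Q) && below w] -> extend nu u = (- M)%R.
  by rewrite mem_filter /extend => /andP[/andP[/negbTE -> ->] _].
have upperE u : u \in [seq w <- c | (w \notin Q) && ~~ below w] -> extend nu u = M.
  by rewrite mem_filter /extend => /andP[/andP[/negbTE -> /negbTE ->] _].
rewrite {1}(chain_split cs) sort_chain_cat; last first.
  by apply/allrelP => x y /lowerE ->; case/andP: (bounds y).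
rewrite sort_chain_cat; last first.
  by apply/allrelP => x y _ /upperE ->; case/andP: (bounds x).
rewrite (sort_chain_const lowerE) (sort_chain_const upperE).
have [vr|vr] := boolP (v \in restr c); last first.
  by rewrite if_same /extend sort_chain_notin.
have vQ : v \in Q by move: vr; rewrite mem_filter => /andP[].
rewrite mem_filter vQ /= (eq_in_sort_chain (nu := nu) _ vr) /extend ?vQ //.
by move=> u; rewrite mem_filter /extend => /andP[->].
Qed.

Lemma csort_extend C nu : all (sorted covers) C -> bounded nu ->
  csort C (extend nu) =1 extend (csort (restrC C) nu).
Proof.
move=> Cs bnu; have extend_map_restr : csort C (extend nu) =1 extend (csort (map restr C) nu).
  elim: C nu Cs bnu => //= c C IH nu /andP[cs Cs] bnu v.
  rewrite (eq_csort _ (sort_chain_extend cs bnu)) IH //.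
  apply: (sort_chain_inv (P := fun x => `|x| <= M)%R) => //.
  by move=> u; rewrite mem_filter => /andP[].
by move=> v; rewrite extend_map_restr /extend /restrC csort_filter_nil.
Qed.

Lemma bounded_csort_restrC C nu : bounded nu -> bounded (csort (restrC C) nu).
Proof.
apply: (csort_inv (P := fun x => `|x| <= M)%R); apply/allP => s.
by rewrite mem_filter => /andP[_ /mapP[c _ ->]]; apply: filter_all.
Qed.

Lemma csort2_extend C C' nu : all (sorted covers) C -> all (sorted covers) C' ->
  bounded nu ->
  csort C' (csort C (extend nu)) =1 extend (csort (restrC C') (csort (restrC C) nu)).
Proof.
move=> Cs C's bnu v; rewrite (eq_csort _ (csort_extend Cs bnu)) csort_extend //.
exact: bounded_csort_restrC.
Qed.

Lemma chain_sorted_restrC mu nu C : mu =1 extend nu ->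
  all (chain_sorted mu) C -> all (chain_sorted nu) (restrC C).
Proof.
move=> mu_nu /allP Cs; apply/allP => s; rewrite mem_filter.
case/andP=> _ /mapP[c cC ->]; have := Cs c cC; rewrite /chain_sorted.
have -> : map nu (restr c) = map mu (restr c).
  by apply/eq_in_map => u; rewrite mem_filter mu_nu /extend => /andP[->].
by apply: (subseq_sorted le_trans); apply/map_subseq/filter_subseq.
Qed.
End Extension.
End ConvexSubposet.

Theorem theorem2p1 (d : Order.disp_t) (T : finPOrderType d) (Q : {set T}) :
  N2 [set: T] -> convex Q -> N2 Q.
Proof.
move=> [C1 [C2 [cover1 [cover2 [sorted12 edges]]]]] convQ.
have s1 := chain_cover_sorted cover1; have s2 := chain_cover_sorted cover2.
exists (restrC Q C1), (restrC Q C2); split; [|split; [|split]].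
- exact: chain_cover_restrC.
- exact: chain_cover_restrC.
- move=> lam; pose M := (\sum_(q in Q) `|lam q|)%R.
  have M_ge0 : (0 <= M)%R by apply: sumr_ge0 => q _; apply: normr_ge0.
  have lam_bounded : bounded Q M lam.
    by move=> v vQ; rewrite /M (bigD1 v) //= lerDl sumr_ge0 // => q _.
  have [sorted1 sorted2] := sorted12 (extend Q M lam).
  split.
  + exact: chain_sorted_restrC (csort2_extend convQ M_ge0 s1 s2 lam_bounded) sorted1.
  + exact: chain_sorted_restrC (csort2_extend convQ M_ge0 s2 s1 lam_bounded) sorted2.
- move=> x y xy_Q; have /edges := covers_in_convex convQ xy_Q.
  case/and4P: xy_Q => xQ yQ _ _; rewrite !has_cat.
  by case/orP=> /(has_restrC xQ yQ) ->; rewrite ?orbT.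
Qed.
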